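(* For every configuration $\mathcal{C}$ of $d$ doors, $\mathrm{Price}(\mathcal{C})\le d$, where $\mathrm{Price}(\mathcal{C})=\mathbb{T}_{\mathcal{C}}\big/\sum_{i=1}^d E_i$.
   Context: Dependent doors model. Fix an integer $d\ge 2$ and doors $1,\dots,d$, all initially closed; once a door opens it stays open forever. A configuration $\mathcal{C}$ specifies for each door $i$ a function $\phi_i^{\mathcal{C}}$ mapping every finite nonempty sequence $(X_1,\dots,X_n)$ of subsets of $\{1,\dots,i-1\}$ to $[0,1]$: $\phi_i^{\mathcal{C}}(X_1,\dots,X_n)$ is the probability that door $i$ has opened during $n$ knocks on it, where $X_j$ is the set of open doors among $\{1,\dots,i-1\}$ at the time of the $j$-th knock on door $i$ (so a closed door $i$ opens at its $n$-th knock with conditional probability $(\phi_i(X_1..X_n)-\phi_i(X_1..X_{n-1}))/(1-\phi_i(X_1..X_{n-1}))$, with $\phi_i$ of the empty sequence equal to $0$). Configurations are assumed monotone ($\phi_i(X')\le\phi_i(X)$ whenever $X'$ is a, not necessarily consecutive, subsequence of $X$) and positively correlated ($\phi_i(X'_1,\dots,X'_n)\le\phi_i(X_1,\dots,X_n)$ whenever $X'_j\subseteq X_j$ for all $j$). The fundamental distribution of door $i$ is $p_i(n)=1-\phi_i(\{1,\dots,i-1\}^n)$ ($p_i(0)=1$), and $E_i=\sum_{n\ge0}p_i(n)$ is assumed finite. A knock sequence $\pi$ is an infinite sequence of door indices, executed in order without any feedback; $\mathbb{T}_{\mathcal{C}}(\pi)$ is the expected number of knocks until all $d$ doors are open, and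 $\mathbb{T}_{\mathcal{C}}=\inf_\pi \mathbb{T}_{\mathcal{C}}(\pi)$. *)

From HB Require Import structures.
From mathcomp Require Import all_boot all_order all_algebra.
From mathcomp Require Import all_classical all_reals ereal topology normedtype sequences.

Set Implicit Arguments. Unset Strict Implicit. Unset Printing Implicit Defensive.
Import Order.TTheory GRing.Theory Num.Theory.
Local Open Scope ring_scope.

Section Doors.
Variables (R : realType) (d : nat).

(* Doors are 0-indexed: door i : 'I_d ; its "lower" doors are the j < i. *)
Definition preds (i : 'I_d) : {set 'I_d} := [set j : 'I_d | (j < i)%N].

Definition valid (i : 'I_d) (s : seq {set 'I_d}) : bool :=
  all (fun X : {set 'I_d} => X \subset preds i) s.

(* A (monotone, positively correlated) configuration. [phi i s] is meaningful
   only for nonempty valid [s]. *)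
Record config := Config {
  phi : 'I_d -> seq {set 'I_d} -> R;
  phi_range : forall i s, valid i s -> s != [::] -> 0 <= phi i s <= 1;
  phi_mono : forall i s s', valid i s -> valid i s' -> s' != [::] ->
     subseq s' s -> phi i s' <= phi i s;
  phi_poscorr : forall i s s', valid i s -> valid i s' -> s' != [::] ->
     size s' = size s -> all2 (fun a b : {set 'I_d} => a \subset b) s' s -> phi i s' <= phi i s
}.

Variable C : config.

Definition Phi (i : 'I_d) (s : seq {set 'I_d}) : R :=
  if s is [::] then 0 else phi C i s.

Definition pfund (i : 'I_d) (n : nat) : R := 1 - Phi i (nseq n (preds i)).

Definition Efund (i : 'I_d) : \bar R := (\sum_(0 <= n <oo) (pfund i n)%:E)%E.

(* Knock sequence: pi k is the door knocked at the (k+1)-th knock (k = 0,1,..).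
   A trajectory is S : nat -> {set 'I_d}, S k = set of open doors before knock k
   (i.e. after k knocks). *)

(* the sets X_1..X_n seen by door i at its knocks strictly before time k *)
Definition hist (pi : nat -> 'I_d) (S : nat -> {set 'I_d}) (i : 'I_d) (k : nat)
  : seq {set 'I_d} :=
  [seq S j :&: preds i | j <- iota 0 k & pi j == i].

Definition trans (pi : nat -> 'I_d) (S : nat -> {set 'I_d}) (k : nat) : R :=
  let i := pi k in
  if i \in S k then (if S k.+1 == S k then 1 else 0)
  else
    let h := hist pi S i k in
    let q := (Phi i (rcons h (S k :&: preds i)) - Phi i h) / (1 - Phi i h) in
    if S k.+1 == S k :|: [set i] then q
    else if S k.+1 == S k then 1 - q else 0.

Definition path_prob (pi : nat -> 'I_d) (t : nat) (S : {ffun 'I_t.+1 -> {set 'I_d}}) : R :=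
  let S' := fun j : nat => S (inord j) in
  (if S' 0%N == finset.set0 then 1 else 0) * \prod_(k < t) trans pi S' k.

Definition tail_prob (pi : nat -> 'I_d) (t : nat) : R :=
  \sum_(S : {ffun 'I_t.+1 -> {set 'I_d}} | S ord_max != [set: 'I_d]) path_prob pi S.

(* expected number of knocks until all doors are open: E[tau] = sum_t P(tau > t) *)
Definition Tpi (pi : nat -> 'I_d) : \bar R := (\sum_(0 <= t <oo) (tail_prob pi t)%:E)%E.

Definition Topt : \bar R := ereal_inf (range Tpi).

Definition SumE : \bar R := (\sum_(i < d) Efund i)%E.
Definition Price : \bar R := (Topt * ((fine SumE)^-1)%:E)%E.

End Doors.

From HB Require Import structures.
From mathcomp Require Import all_boot all_order all_algebra.
From mathcomp Require Import all_classical all_reals ereal topology normedtype sequences.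
From mathcomp Require Import ring lra zify.
Import Order.TTheory GRing.Theory Num.Theory.
Local Open Scope ring_scope.

Set Implicit Arguments. Unset Strict Implicit. Unset Printing Implicit Defensive.

(* Knock in round robin, and call door i critical at time k when it is closed
   while all doors below it are open.  If some door is still closed, the least
   closed door is critical, so P(tau > k) <= sum_i P(i critical at k), and it
   suffices to bound the expected number of critical times of door i before N
   by d * sum_(n < N) p_i(n).  While door i is critical, every knock on it sees
   all lower doors open and round robin knocks on it at least once every d
   steps, so by monotonicity of phi_i the probability that it is still closed
   j steps into that period is at most p_i(j %/ d): earlier knocks on it
   only help.  This is made rigorous with a supermartingale [potential] over
   the finite trajectories of the knocking process. *)

Section Configuration.
Variables (R : realType) (d : nat) (C : config R d).
Implicit Types (i : 'I_d) (h : seq {set 'I_d}) (y : {set 'I_d}).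

Lemma valid_cat i s1 s2 : valid i (s1 ++ s2) = valid i s1 && valid i s2.
Proof. by rewrite /valid all_cat. Qed.

Lemma valid_rcons i s x : valid i (rcons s x) = valid i s && (x \subset preds i).
Proof. by rewrite /valid all_rcons andbC. Qed.

Lemma valid_nseq i n : valid i (nseq n (preds i)).
Proof. by rewrite /valid all_nseq subxx orbT. Qed.

Lemma valid_hist pi s i k : valid i (hist pi s i k).
Proof. by rewrite /valid all_map; apply/allP => j _ /=; exact: subsetIr. Qed.

Lemma Phi_ge0 i h : valid i h -> 0 <= Phi C i h.
Proof. by case: h => [|x h] vh //; have /andP[] := phi_range C vh isT. Qed.

Lemma Phi_le1 i h : valid i h -> Phi C i h <= 1.
Proof. by case: h => [|x h] vh //; have /andP[] := phi_range C vh isT. Qed.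

Lemma Phi_mono i h h' : valid i h -> valid i h' -> subseq h' h -> Phi C i h' <= Phi C i h.
Proof.
case: h' => [|x' h'] vh vh' sub; first exact: Phi_ge0.
case: h sub vh => [|x h] sub vh; first by rewrite subseq0 in sub.
exact: phi_mono.
Qed.

Lemma pfund_ge0 i n : 0 <= pfund C i n.
Proof. by rewrite subr_ge0 Phi_le1 // valid_nseq. Qed.

Lemma pfund_le i m n : (m <= n)%N -> pfund C i n <= pfund C i m.
Proof.
move=> mn; rewrite lerD2l lerN2; apply: Phi_mono; rewrite ?valid_nseq //.
by rewrite -(subnKC mn) nseqD prefix_subseq.
Qed.

Lemma survival_cat_le_pfund i h n : valid i h ->
  1 - Phi C i (h ++ nseq n (preds i)) <= pfund C i n.
Proof.
move=> vh; rewrite lerD2l lerN2; apply: Phi_mono; rewrite ?valid_cat ?vh ?valid_nseq //.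
exact: suffix_subseq.
Qed.

Lemma survival_cat_ge0 i h n : valid i h -> 0 <= 1 - Phi C i (h ++ nseq n (preds i)).
Proof. by move=> vh; rewrite subr_ge0 Phi_le1 // valid_cat vh valid_nseq. Qed.

Definition hazard i h (y : {set 'I_d}) : R :=
  (Phi C i (rcons h y) - Phi C i h) / (1 - Phi C i h).

Lemma hazard_range i h y : valid i h -> y \subset preds i -> 0 <= hazard i h y <= 1.
Proof.
move=> vh vy.
have vhy : valid i (rcons h y) by rewrite valid_rcons vh vy.
have le_Phi : Phi C i h <= Phi C i (rcons h y) by apply: Phi_mono => //; exact: subseq_rcons.
have [P1|P1] := eqVneq (Phi C i h) 1; first by rewrite /hazard P1 subrr invr0 mulr0 lexx ler01.
have gt0 : 0 < 1 - Phi C i h by rewrite subr_gt0 lt_neqAle P1 Phi_le1.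
rewrite /hazard divr_ge0 ?subr_ge0 ?(ltW gt0) ?Phi_le1 //=.
by rewrite ler_pdivrMr // mul1r lerD2r Phi_le1.
Qed.

Lemma one_sub_hazard i h y : Phi C i h != 1 ->
  1 - hazard i h y = (1 - Phi C i (rcons h y)) / (1 - Phi C i h).
Proof.
move=> P1; have nz : 1 - Phi C i h != 0 by rewrite subr_eq0 eq_sym.
by rewrite /hazard; field.
Qed.

End Configuration.

Section History.
Variables (d : nat) (pi : nat -> 'I_d).
Local Notation T := {set 'I_d}.

Definition upd (s : nat -> T) n x : nat -> T := fun j => if j == n then x else s j.

Lemma hist_ext s s' i k : (forall j, (j < k)%N -> s j = s' j) ->
  hist pi s i k = hist pi s' i k.
Proof.
move=> e; apply/eq_in_map => j.
by rewrite mem_filter mem_iota add0n => /andP[_ /andP[_ jk]]; rewrite e.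
Qed.

Lemma histS s i k : hist pi s i k.+1 =
  if pi k == i then rcons (hist pi s i k) (s k :&: preds i) else hist pi s i k.
Proof.
rewrite /hist -addn1 iotaD filter_cat map_cat /= add0n.
by case: eqP => _ /=; rewrite ?cats1 ?cats0.
Qed.

Lemma hist_upd s i k x : hist pi (upd s k.+1 x) i k.+1 =
  if pi k == i then rcons (hist pi s i k) (s k :&: preds i) else hist pi s i k.
Proof.
rewrite histS (@hist_ext (upd s k.+1 x) s) => [|j jk]; first by rewrite /upd ltn_eqF.
by rewrite /upd ltn_eqF // ltnW.
Qed.

End History.

Lemma eq_setU1r (T : finType) (X : {set T}) a : (X :|: [set a] == X) = (a \in X).
Proof.
apply/eqP/idP => [<-|aX]; first by rewrite finset.in_setU finset.set11 orbT.
by apply/finset.setUidPl; rewrite finset.sub1set.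
Qed.

Section FfunRcons.
Variables (T : Type) (t : nat).

Definition ffun_rcons (S : {ffun 'I_t.+1 -> T}) (x : T) : {ffun 'I_t.+2 -> T} :=
  [ffun j : 'I_t.+2 => if (j < t.+1)%N then S (inord j) else x].

Definition ffun_unrcons (S : {ffun 'I_t.+2 -> T}) : {ffun 'I_t.+1 -> T} * T :=
  ([ffun j : 'I_t.+1 => S (inord j)], S ord_max).

Lemma ffun_rconsK : cancel (fun p => ffun_rcons p.1 p.2) ffun_unrcons.
Proof.
move=> [S x]; rewrite /ffun_unrcons /ffun_rcons ffunE /= ltnn; congr pair.
apply/ffunP => j; rewrite !ffunE inordK ?ltn_ord ?inord_val //.
exact: ltnW (ltn_ord j).
Qed.

Lemma ffun_unrconsK : cancel ffun_unrcons (fun p => ffun_rcons p.1 p.2).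
Proof.
move=> S; apply/ffunP => j; rewrite ffunE /=.
case: ifP => jt; first by rewrite ffunE inordK // inord_val.
by congr (S _); apply: val_inj => /=; have := ltn_ord j; lia.
Qed.

End FfunRcons.

Lemma sum_ffunS (T : finType) (V : nmodType) t (F : {ffun 'I_t.+2 -> T} -> V) :
  \sum_(S : {ffun 'I_t.+2 -> T}) F S =
  \sum_(S : {ffun 'I_t.+1 -> T}) \sum_(x : T) F (ffun_rcons S x).
Proof.
rewrite pair_big /= (reindex (fun p => ffun_rcons p.1 p.2)) //.
by exists (@ffun_unrcons T t) => S _; [exact: ffun_rconsK | exact: ffun_unrconsK].
Qed.

Lemma inord_gt (t j : nat) : (t < j)%N -> (inord j : 'I_t.+1) = ord0.
Proof. by move=> tj; apply: val_inj; rewrite /= /inord val_insubd ifF //; lia. Qed.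

Section Trajectories.
Variables (R : realType) (d : nat) (C : config R d) (pi : nat -> 'I_d).
Local Notation T := {set 'I_d}.
Implicit Types (i : 'I_d) (s : nat -> T).

Definition knock_hazard s k : R :=
  hazard C (pi k) (hist pi s (pi k) k) (s k :&: preds (pi k)).

Lemma trans_ext s s' k : (forall j, (j <= k.+1)%N -> s j = s' j) ->
  trans C pi s k = trans C pi s' k.
Proof.
move=> e; rewrite /trans (@hist_ext _ pi s s') => [|j jk]; last by apply: e; lia.
by rewrite (e k) // (e k.+1).
Qed.

Lemma trans_upd s k x : trans C pi (upd s k.+1 x) k =
  if pi k \in s k then (if x == s k then 1 else 0)
  else if x == s k :|: [set pi k] then knock_hazard s k
  else if x == s k then 1 - knock_hazard s k else 0.
Proof.
have e1 : upd s k.+1 x k = s k by rewrite /upd ltn_eqF.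
have e2 : upd s k.+1 x k.+1 = x by rewrite /upd eqxx.
rewrite /trans /knock_hazard e1 e2 (@hist_ext _ pi (upd s k.+1 x) s) // => j jk.
by rewrite /upd ltn_eqF // ltnW.
Qed.

Lemma trans_ge0 s k : 0 <= trans C pi s k.
Proof.
have /andP[q0 q1] := hazard_range C (valid_hist pi s (pi k) k) (subsetIr (s k) (preds (pi k))).
rewrite /trans; case: ifP => _; first by case: ifP.
by case: ifP => _ //; case: ifP => _ //; rewrite subr_ge0.
Qed.

Lemma trans_sum1 s k : \sum_(x : T) trans C pi (upd s k.+1 x) k = 1.
Proof.
under eq_bigr => x _ do rewrite trans_upd.
have [ik|ik] := boolP (pi k \in s k).
  by rewrite (bigD1 (s k)) //= eqxx big1 ?addr0 // => x /negbTE ->.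
have neq : s k != s k :|: [set pi k] by rewrite eq_sym eq_setU1r.
rewrite (bigD1 (s k :|: [set pi k])) //= eqxx (bigD1 (s k)) /=; last by rewrite neq.
rewrite eqxx (negbTE neq) big1 ?addr0; first by rewrite addrCA subrr addr0.
by move=> x /andP[/negbTE -> /negbTE ->].
Qed.

Lemma trans_supp s k : trans C pi s k != 0 ->
  s k.+1 = s k \/ s k.+1 = s k :|: [set pi k].
Proof.
rewrite /trans; have [->|_] := eqVneq (s k.+1) (s k); first by left.
have [->|_] := eqVneq (s k.+1) (s k :|: [set pi k]); first by right.
by rewrite /= if_same eqxx.
Qed.

Lemma trans_upd_supp s k x : trans C pi (upd s k.+1 x) k != 0 ->
  x = s k \/ x = s k :|: [set pi k].
Proof. by move/trans_supp; rewrite /upd eqxx ltn_eqF. Qed.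

Definition weight (t : nat) s : R :=
  (if s 0%N == finset.set0 then 1 else 0) * \prod_(k < t) trans C pi s k.

Lemma weight_ge0 t s : 0 <= weight t s.
Proof.
apply: mulr_ge0; first by case: ifP.
by apply: prodr_ge0 => k _; exact: trans_ge0.
Qed.

Lemma weightS t s : weight t.+1 s = weight t s * trans C pi s t.
Proof. by rewrite /weight big_ord_recr /= mulrA. Qed.

Lemma weight_ext t s s' : (forall j, (j <= t)%N -> s j = s' j) -> weight t s = weight t s'.
Proof.
move=> e; rewrite /weight (e 0%N) //; congr (_ * _); apply: eq_bigr => j _.
by apply: trans_ext => l lj; apply: e; have := ltn_ord j; lia.
Qed.

Lemma Phi_hist_lt1 i k s : weight k s != 0 -> i \notin s k ->
  Phi C i (hist pi s i k) < 1.
Proof.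
elim: k => [|k IH]; first by rewrite /hist /= ltr01.
rewrite weightS mulf_eq0 negb_or => /andP[wk tk].
have [e|e] := trans_supp tk; last first.
  rewrite e finset.in_setU finset.in_set1 negb_or eq_sym => /andP[ik /negbTE pik].
  by rewrite histS pik; exact: IH.
rewrite e => ik; have := IH wk ik; rewrite histS.
have [pki|//] := eqVneq (pi k) i; subst i.
have neq : (s k == s k :|: [set pi k]) = false by rewrite eq_sym eq_setU1r (negbTE ik).
move: tk; rewrite /trans (negbTE ik) e /= neq eqxx.
rewrite -/(knock_hazard s k) => nz P1.
rewrite lt_neqAle Phi_le1 ?valid_rcons ?valid_hist ?subsetIr // andbT.
apply: contraNneq nz => P'1.
by rewrite /knock_hazard one_sub_hazard ?(lt_eqF P1) // P'1 subrr mul0r.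
Qed.

(* [traj S] reads [S ord0] beyond [t]; [weight t] only looks at indices [<= t]. *)
Definition traj t (S : {ffun 'I_t.+1 -> T}) : nat -> T := fun j => S (inord j).

Definition Ex t (G : (nat -> T) -> R) : R :=
  \sum_(S : {ffun 'I_t.+1 -> T}) weight t (traj S) * G (traj S).

Lemma path_probE t (S : {ffun 'I_t.+1 -> T}) : path_prob C pi S = weight t (traj S).
Proof. by []. Qed.

Lemma Ex_le t G H : (forall s, weight t s != 0 -> G s <= H s) -> Ex t G <= Ex t H.
Proof.
move=> le; apply: ler_sum => S _.
have [->|nz] := eqVneq (weight t (traj S)) 0; first by rewrite !mul0r.
by rewrite ler_wpM2l ?weight_ge0 ?le.
Qed.

Lemma Ex_ge0 t G : (forall s, 0 <= G s) -> 0 <= Ex t G.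
Proof. by move=> G0; apply: sumr_ge0 => S _; rewrite mulr_ge0 ?weight_ge0. Qed.

Lemma Ex_B t G H : Ex t (fun s => G s - H s) = Ex t G - Ex t H.
Proof. by rewrite /Ex -sumrB; apply: eq_bigr => S _; rewrite mulrBr. Qed.

Lemma Ex_sum t (I : finType) (F : I -> (nat -> T) -> R) :
  Ex t (fun s => \sum_i F i s) = \sum_i Ex t (F i).
Proof. by rewrite /Ex exchange_big /=; apply: eq_bigr => S _; rewrite mulr_sumr. Qed.

Lemma Ex_scale t c G : Ex t (fun s => c * G s) = c * Ex t G.
Proof. by rewrite /Ex mulr_sumr; apply: eq_bigr => S _; rewrite mulrCA. Qed.

Lemma traj_rcons t (S : {ffun 'I_t.+1 -> T}) x : traj (ffun_rcons S x) = upd (traj S) t.+1 x.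
Proof.
apply/funext => j; rewrite /traj /upd ffunE.
case: (ltngtP j t.+1) => jt.
- by rewrite inordK ?jt // ltnW.
- rewrite (inord_gt (t := t.+1) jt) (inord_gt (t := t) (ltnW jt)) /=.
  by congr (S _); apply: val_inj; rewrite /= inordK.
- by rewrite jt inordK // ltnn.
Qed.

Lemma ExS t G : Ex t.+1 G =
  Ex t (fun s => \sum_(x : T) trans C pi (upd s t.+1 x) t * G (upd s t.+1 x)).
Proof.
rewrite /Ex sum_ffunS; apply: eq_bigr => S _; rewrite mulr_sumr; apply: eq_bigr => x _.
rewrite traj_rcons weightS mulrA (@weight_ext t (upd (traj S) t.+1 x) (traj S)) //.
by move=> j jt; rewrite /upd ltn_eqF.
Qed.

Lemma Ex1 t : Ex t (fun _ => 1) = 1.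
Proof.
elim: t => [|t IH].
  rewrite /Ex (bigD1 [ffun _ => finset.set0]) //= big1.
    by rewrite /weight /traj ffunE eqxx big_ord0 !mulr1 addr0.
  move=> S nS; rewrite /weight /traj; case: eqP => [S0|]; last by rewrite !mul0r.
  case/eqP: nS; apply/ffunP => j; rewrite ffunE -S0 ord1.
  by congr (S _); apply: val_inj; rewrite /= inordK.
rewrite ExS -{2}IH; congr Ex; apply/funext => s.
by under eq_bigr do rewrite mulr1; rewrite trans_sum1.
Qed.

Lemma trans_avg_le s k (f : T -> R) M :
  (forall x, trans C pi (upd s k.+1 x) k != 0 -> f x <= M) ->
  \sum_x trans C pi (upd s k.+1 x) k * f x <= M.
Proof.
move=> fM; rewrite -[M]mul1r -(trans_sum1 s k) mulr_suml.
apply: ler_sum => x _; have [->|nz] := eqVneq (trans C pi (upd s k.+1 x) k) 0.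
  by rewrite !mul0r.
by rewrite ler_wpM2l ?trans_ge0 ?fM.
Qed.

End Trajectories.

Lemma sum_nat_divn (V : nmodType) (f : nat -> V) (d M : nat) : (0 < d)%N ->
  \sum_(0 <= m < d * M) f (m %/ d)%N = (\sum_(0 <= n < M) f n) *+ d.
Proof.
move=> d0; elim: M => [|M IH]; first by rewrite muln0 !big_geq ?mul0rn.
rewrite mulnSr (big_cat_nat (n := d * M)) ?leq_addr //= IH big_nat_recr //= mulrnDl.
congr (_ + _); rewrite (eq_big_nat _ _ (F2 := fun _ => f M)) => [|m /andP[m1 m2]].
  by rewrite sumr_const_nat addKn.
rewrite -(subnKC m1) mulnC divnMDl // divn_small ?addn0 //; lia.
Qed.

Lemma ler_sum_nat_widen (R : numDomainType) (f : nat -> R) (a b : nat) :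
  (a <= b)%N -> (forall m, 0 <= f m) ->
  \sum_(0 <= m < a) f m <= \sum_(0 <= m < b) f m.
Proof.
by move=> ab f0; rewrite (big_cat_nat (leq0n a) ab) /= lerDl sumr_ge0.
Qed.

Lemma ler_sum_nat_shift (R : numDomainType) (f : nat -> R) (k N : nat) :
  (forall m, 0 <= f m) -> \sum_(k <= j < N) f (j - k)%N <= \sum_(0 <= j < N) f j.
Proof.
move=> f0; rewrite -{1}[k]add0n big_addn.
under eq_bigr do rewrite addnK.
exact: ler_sum_nat_widen (leq_subr _ _) f0.
Qed.

Lemma ler_div_mul_div (R : numFieldType) (a b x : R) : 0 <= x / b -> a / b * (x / a) <= x / b.
Proof.
have [->|a0] := eqVneq a 0; first by rewrite !mul0r.
have -> : a / b * (x / a) = a / a * (x / b) by ring.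
by rewrite divff // mul1r.
Qed.

Definition fair d (pi : nat -> 'I_d) :=
  forall i k, exists2 l, (k <= l < k + d)%N & pi l = i.

Definition round_robin d (d_gt0 : (0 < d)%N) (k : nat) : 'I_d := Ordinal (ltn_pmod k d_gt0).

Lemma round_robin_fair d (d_gt0 : (0 < d)%N) : fair (round_robin d_gt0).
Proof.
move=> i k; have := ltn_ord i; have [ri|ir] := leqP (k %% d) i => id.
- exists (k %/ d * d + i)%N; first by have := divn_eq k d; lia.
  by apply: val_inj; rewrite /= modnMDl modn_small.
- exists ((k %/ d).+1 * d + i)%N; first by have := divn_eq k d; rewrite mulSn; lia.
  by apply: val_inj; rewrite /= modnMDl modn_small.
Qed.

Section Potential.
Variables (R : realType) (d : nat) (C : config R d) (pi : nat -> 'I_d) (N : nat).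
Hypotheses (d_gt0 : (0 < d)%N) (pi_fair : fair pi).
Local Notation T := {set 'I_d}.
Implicit Types (i : 'I_d) (h : seq T) (s : nat -> T).
Local Notation Ex := (Ex C pi).

Definition knocks i k j : nat := \sum_(k <= l < j) (pi l == i).

Lemma knocks_nil i k : knocks i k k = 0%N.
Proof. exact: big_geq. Qed.

Lemma knocksS i k j : (k < j)%N -> knocks i k j = ((pi k == i) + knocks i k.+1 j)%N.
Proof. exact: big_ltn. Qed.

Lemma knocks_cat i k l j : (k <= l <= j)%N -> knocks i k j = (knocks i k l + knocks i l j)%N.
Proof. by move=> /andP[kl lj]; rewrite /knocks (big_cat_nat kl lj). Qed.

Lemma knocks_window i k : (0 < knocks i k (k + d))%N.
Proof.
have [l kl <-] := pi_fair i k.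
by rewrite lt0n sum_nat_seq_neq0; apply/hasP; exists l; rewrite ?mem_index_iota ?eqxx.
Qed.

Lemma knocks_mul i k q : (q <= knocks i k (k + q * d))%N.
Proof.
elim: q => [|q IH] //; rewrite (@knocks_cat i k (k + q * d)); last by rewrite mulSn; lia.
by have := knocks_window i (k + q * d); rewrite mulSn (addnC d) addnA; lia.
Qed.

Lemma knocks_lb i k j : (k <= j)%N -> ((j - k) %/ d <= knocks i k j)%N.
Proof.
move=> kj; set q := ((j - k) %/ d)%N.
have qj : (k + q * d <= j)%N by have := leq_divM (j - k) d; rewrite -/q; lia.
rewrite (@knocks_cat i k (k + q * d) j) ?leq_addr //.
exact: leq_trans (knocks_mul i k q) (leq_addr _ _).
Qed.

Definition budget i : R := d%:R * \sum_(n < N) pfund C i n.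

Definition survival_sum i h k : R :=
  \sum_(k <= j < N) (1 - Phi C i (h ++ nseq (knocks i k j) (preds i))).

(* Dividing by 1 - Phi h turns survival probabilities into probabilities
   conditional on the history h of door i.  Once all lower doors of i are
   open, [potential] is the conditional expected number of critical times of i
   in [k, N); before that it is [budget i / (1 - Phi h)], which is a martingale
   while i is not critical and dominates the former when the lower doors open
   ([survival_sum_le_budget]). *)
Definition potential i k s : R :=
  if i \in s k then 0 else
  (if preds i \subset s k then survival_sum i (hist pi s i k) k else budget i) /
  (1 - Phi C i (hist pi s i k)).

Definition critical i k s : bool := (preds i \subset s k) && (i \notin s k).

Lemma budget_ge0 i : 0 <= budget i.
Proof. by rewrite mulr_ge0 ?sumr_ge0 // => n _; exact: pfund_ge0. Qed.

Lemma survival_sum_ge0 i h k : valid i h -> 0 <= survival_sum i h k.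
Proof. by move=> vh; apply: sumr_ge0 => j _; exact: survival_cat_ge0. Qed.

Lemma survival_sum_ge i h k : valid i h -> (k < N)%N -> 1 - Phi C i h <= survival_sum i h k.
Proof.
move=> vh kN; rewrite /survival_sum big_ltn // knocks_nil cats0 lerDl.
by apply: sumr_ge0 => j _; exact: survival_cat_ge0.
Qed.

Lemma survival_sumS i h k : (k < N)%N ->
  survival_sum i (if pi k == i then rcons h (preds i) else h) k.+1 =
  survival_sum i h k - (1 - Phi C i h).
Proof.
move=> kN; rewrite [survival_sum i h k]/survival_sum big_ltn // knocks_nil cats0 addrC addKr.
apply: eq_big_nat => j /andP[kj _].
by rewrite (knocksS _ kj); case: eqP => _ //=; rewrite cat_rcons.
Qed.

Lemma survival_sum_le_budget i h k : valid i h -> survival_sum i h k <= budget i.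
Proof.
move=> vh; rewrite /budget -(big_mkord xpredT) mulr_natl -sum_nat_divn //.
apply: (le_trans (y := \sum_(k <= j < N) pfund C i ((j - k) %/ d)%N)).
  apply: ler_sum_nat => j /andP[kj _].
  by apply: le_trans (survival_cat_le_pfund _ _ vh) _; apply: pfund_le; exact: knocks_lb.
apply: le_trans (@ler_sum_nat_shift _ (fun m => pfund C i (m %/ d)) k N _) _.
  by move=> m; exact: pfund_ge0.
by apply: ler_sum_nat_widen; [rewrite leq_pmull | move=> m; exact: pfund_ge0].
Qed.

Lemma potential_ge0 i k s : 0 <= potential i k s.
Proof.
rewrite /potential; case: ifP => // _; apply: divr_ge0.
  by case: ifP => _; [exact: survival_sum_ge0 (valid_hist _ _ _ _) | exact: budget_ge0].
by rewrite subr_ge0 Phi_le1 // valid_hist.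
Qed.

Lemma potential_upd i s k x : potential i k.+1 (upd s k.+1 x) =
  let h := if pi k == i then rcons (hist pi s i k) (s k :&: preds i) else hist pi s i k in
  if i \in x then 0 else
  (if preds i \subset x then survival_sum i h k.+1 else budget i) / (1 - Phi C i h).
Proof. by rewrite /potential hist_upd {1 2}/upd eqxx. Qed.

Lemma potential_step_open i k s : i \in s k ->
  \sum_x trans C pi (upd s k.+1 x) k * potential i k.+1 (upd s k.+1 x)
  <= potential i k s - (critical i k s)%:R.
Proof.
move=> iS; rewrite [potential i k s]/potential /critical iS andbF subrr.
apply: trans_avg_le => x /trans_upd_supp [->|->]; rewrite potential_upd /= ?iS //.
by rewrite finset.in_setU iS.
Qed.

Lemma potential_step_knocked i k s : (k < N)%N -> weight C pi k s != 0 ->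
  i \notin s k -> pi k = i ->
  \sum_x trans C pi (upd s k.+1 x) k * potential i k.+1 (upd s k.+1 x)
  <= potential i k s - (critical i k s)%:R.
Proof.
move=> kN wk iS pki; have P1 := Phi_hist_lt1 wk iS.
set h := hist pi s i k in P1 *; set P := Phi C i h in P1 *.
have vh : valid i h := valid_hist pi s i k.
have P1' : P != 1 by rewrite lt_eqF.
have nP : 1 - P != 0 by rewrite subr_eq0 eq_sym.
have neq : s k != s k :|: [set pi k] by rewrite eq_sym eq_setU1r pki.
rewrite (bigD1 (s k)) //= big1 ?addr0 => [|x xs]; last first.
  have [->|/trans_upd_supp[ex|->]] := eqVneq (trans C pi (upd s k.+1 x) k) 0.
  - by rewrite mul0r.
  - by rewrite ex eqxx in xs.
  by rewrite potential_upd /= finset.in_setU finset.in_set1 pki eqxx orbT mulr0.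
rewrite trans_upd potential_upd /= pki eqxx (negbTE iS) -pki (negbTE neq) eqxx pki.
rewrite /knock_hazard pki -/h one_sub_hazard // /potential /critical (negbTE iS) andbT -/h -/P.
case: ifP => L; last first.
  by rewrite subr0 ler_div_mul_div // divr_ge0 ?budget_ge0 // subr_ge0 ltW.
have -> : s k :&: preds i = preds i by apply/finset.setIidPr.
have := @survival_sumS i h k kN; rewrite pki eqxx => ->.
have -> : survival_sum i h k / (1 - P) - 1 = (survival_sum i h k - (1 - P)) / (1 - P).
  by field.
by rewrite ler_div_mul_div // divr_ge0 ?subr_ge0 ?survival_sum_ge // ltW.
Qed.

Lemma potential_step_other i k s : (k < N)%N -> weight C pi k s != 0 ->
  i \notin s k -> pi k != i ->
  \sum_x trans C pi (upd s k.+1 x) k * potential i k.+1 (upd s k.+1 x)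
  <= potential i k s - (critical i k s)%:R.
Proof.
move=> kN wk iS pki; have P1 := Phi_hist_lt1 wk iS.
set h := hist pi s i k in P1 *; set P := Phi C i h in P1 *.
have vh : valid i h := valid_hist pi s i k.
have nP : 1 - P != 0 by rewrite subr_eq0 eq_sym lt_eqF.
apply: trans_avg_le => x /trans_upd_supp ex.
have ix : i \notin x.
  by case: ex => ->; rewrite ?finset.in_setU ?finset.in_set1 ?negb_or ?iS // eq_sym.
rewrite potential_upd /= (negbTE ix) (negbTE pki) -/h -/P.
rewrite /potential /critical (negbTE iS) andbT -/h -/P.
have [L|L] := boolP (preds i \subset s k).
  have -> : preds i \subset x.
    by case: ex => ->; last exact: fintype.subset_trans L (finset.subsetUl _ _).
  have := @survival_sumS i h k kN; rewrite (negbTE pki) -/P => ->.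
  have -> : survival_sum i h k / (1 - P) - 1 = (survival_sum i h k - (1 - P)) / (1 - P).
    by field.
  by [].
rewrite /= subr0 ler_wpM2r ?invr_ge0 ?subr_ge0 ?(ltW P1) //.
by case: ifP => _ //; exact: survival_sum_le_budget.
Qed.

Lemma potential_step i k s : (k < N)%N -> weight C pi k s != 0 ->
  \sum_x trans C pi (upd s k.+1 x) k * potential i k.+1 (upd s k.+1 x)
  <= potential i k s - (critical i k s)%:R.
Proof.
move=> kN wk; have [iS|iS] := boolP (i \in s k); first exact: potential_step_open.
have [pki|pki] := eqVneq (pi k) i.
  exact: potential_step_knocked.
exact: potential_step_other.
Qed.

Lemma Ex_potential_telescope i M : (M <= N)%N ->
  Ex M (potential i M) + \sum_(j < M) Ex j (fun s => (critical i j s)%:R) <= Ex 0 (potential i 0).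
Proof.
elim: M => [|M IH] MN; first by rewrite big_ord0 addr0.
have step : Ex M.+1 (potential i M.+1) <=
    Ex M (potential i M) - Ex M (fun s => (critical i M s)%:R).
  by rewrite ExS -Ex_B; apply: Ex_le => s ws; exact: potential_step.
rewrite big_ord_recr /=; have := IH (ltnW MN); lra.
Qed.

Lemma Ex_potential0 i : Ex 0 (potential i 0) <= budget i.
Proof.
rewrite -[budget i]mulr1 -(Ex1 C pi 0) -Ex_scale; apply: Ex_le => s ws.
have s0 : s 0%N = finset.set0.
  by move: ws; rewrite /weight; case: (s 0%N =P finset.set0) => // _; rewrite mul0r eqxx.
rewrite mulr1 /potential s0 finset.in_set0 /hist /= subr0 divr1.
by case: ifP => _ //; exact: survival_sum_le_budget.
Qed.

Lemma Ex_critical_le_budget i : \sum_(j < N) Ex j (fun s => (critical i j s)%:R) <= budget i.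
Proof.
have := Ex_potential_telescope i (leqnn N); have := Ex_potential0 i.
have : 0 <= Ex N (potential i N) by apply: Ex_ge0 => s; exact: potential_ge0.
lra.
Qed.

Lemma exists_critical j s : s j != [set: 'I_d] -> exists i, critical i j s.
Proof.
move=> sT; have /fintype.subsetPn[i0 _ i0S] : ~~ ([set: 'I_d] \subset s j).
  by rewrite finset.subTset.
have [i iS min_i] := arg_minnP (P := fun i => i \notin s j) (fun i : 'I_d => val i) i0S.
exists i; rewrite /critical iS andbT; apply/fintype.subsetP => l; rewrite finset.inE => li.
by apply: contraLR li => /min_i; rewrite -leqNgt.
Qed.

Lemma tail_prob_le_critical j :
  tail_prob C pi j <= \sum_i Ex j (fun s => (critical i j s)%:R).
Proof.
rewrite -Ex_sum /tail_prob /Ex big_mkcond /=; apply: ler_sum => S _.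
have last_traj : traj S j = S ord_max by rewrite /traj; congr (S _); apply: val_inj; rewrite /= inordK.
case: ifP => [ST|_]; last by rewrite mulr_ge0 ?weight_ge0 ?sumr_ge0.
rewrite path_probE ler_peMr ?weight_ge0 //.
have [|i ci] := @exists_critical j (traj S); first by rewrite last_traj ST.
by rewrite (bigD1 i) //= ci lerDl sumr_ge0.
Qed.

Lemma sum_tail_prob_le_budget : \sum_(j < N) tail_prob C pi j <= \sum_i budget i.
Proof.
apply: (le_trans (y := \sum_(j < N) \sum_i Ex j (fun s => (critical i j s)%:R))).
  by apply: ler_sum => j _; exact: tail_prob_le_critical.
by rewrite exchange_big /=; apply: ler_sum => i _; exact: Ex_critical_le_budget.
Qed.

End Potential.

Section FiniteExpectations.
Variables (R : realType) (d : nat) (C : config R d).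
Hypothesis E_fin : forall i, (Efund C i < +oo)%E.

Lemma Efund_ge0 i : (0 <= Efund C i)%E.
Proof. by apply: nneseries_ge0 => n _ _; rewrite lee_fin pfund_ge0. Qed.

Lemma EfundE i : Efund C i = (fine (Efund C i))%:E.
Proof. by rewrite fineK // ge0_fin_numE ?Efund_ge0. Qed.

Lemma sum_pfund_le_Efund i n : \sum_(k < n) pfund C i k <= fine (Efund C i).
Proof.
rewrite -lee_fin -EfundE -sumEFin.
have := @nneseries_lim_ge _ (fun k => (pfund C i k)%:E) xpredT 0 n.
by rewrite big_mkord; apply => k _ _; rewrite lee_fin pfund_ge0.
Qed.

Lemma SumEE : SumE C = (\sum_i fine (Efund C i))%:E.
Proof. by rewrite /SumE (eq_bigr _ (fun i _ => EfundE i)) sumEFin. Qed.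

Lemma Efund_ge1 i : 1 <= fine (Efund C i).
Proof. by apply: le_trans (sum_pfund_le_Efund i 1); rewrite big_ord1 /pfund /Phi subr0. Qed.

Lemma Tpi_le pi : (0 < d)%N -> fair pi ->
  (Tpi C pi <= (d%:R * \sum_i fine (Efund C i))%:E)%E.
Proof.
move=> d_gt0 pi_fair.
have tail_ge0 t : 0 <= tail_prob C pi t.
  by apply: sumr_ge0 => S _; rewrite path_probE weight_ge0.
apply: lime_le; first by apply: is_cvg_ereal_nneg_natsum => n _; rewrite lee_fin.
apply: nearW => N; rewrite sumEFin lee_fin big_mkord.
apply: le_trans (sum_tail_prob_le_budget C N d_gt0 pi_fair) _.
rewrite /budget -mulr_sumr ler_wpM2l // ler_sum // => i _.
exact: sum_pfund_le_Efund.
Qed.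

End FiniteExpectations.

Theorem mainTheorem7 (R : realType) (d : nat) (hd : (2 <= d)%N) (C : config R d)
  (hE : forall i : 'I_d, (Efund C i < +oo)%E) :
  (Price C <= (d%:R)%:E)%E.
Proof.
have d_gt0 : (0 < d)%N by apply: ltnW.
set F := \sum_i fine (Efund C i).
have F_gt0 : 0 < F.
  apply: (lt_le_trans (y := \sum_(i < d) (1 : R))); first by rewrite sumr_const card_ord ltr0n.
  by apply: ler_sum => i _; exact: Efund_ge1.
have T_le : (Topt C <= (d%:R * F)%:E)%E.
  apply: (le_trans (y := Tpi C (round_robin d_gt0))).
    by apply: ereal_inf_lbound; exists (round_robin d_gt0).
  exact: Tpi_le hE _ d_gt0 (round_robin_fair d_gt0).
rewrite /Price (SumEE hE) -/F /=.
apply: le_trans (lee_wpmul2r _ T_le) _; first by rewrite lee_fin invr_ge0 ltW.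
by rewrite -EFinM -mulrA divff ?mulr1 // gt_eqF.
Qed.
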